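(* For every policy $\pi$, every bounded measurable heuristic $h:\mathcal S\to\mathbb R$ and every mixing coefficient $\lambda\in[0,1]$, $$V^*(d_0)-V^\pi(d_0)=\mathrm{Regret}(h,\lambda,\pi)+\mathrm{Bias}(h,\lambda,\pi),$$ where $$\mathrm{Regret}(h,\lambda,\pi):=\lambda\big(\widetilde V^*(d_0)-\widetilde V^\pi(d_0)\big)+\frac{1-\lambda}{1-\gamma}\big(\widetilde V^*(d^\pi)-\widetilde V^\pi(d^\pi)\big),$$ $$\mathrm{Bias}(h,\lambda,\pi):=\big(V^*(d_0)-\widetilde V^*(d_0)\big)+\frac{\gamma(1-\lambda)}{1-\gamma}\,\mathbb E_{(s,a)\sim d^\pi}\,\mathbb E_{s'\sim P(\cdot|s,a)}\big[h(s')-\widetilde V^*(s')\big].$$ (Here $\widetilde V^\pi,\widetilde V^*$ are computed in the reshaped MDP built from $h$ and $\lambda$.) Moreover, for every constant $b\in\mathbb R$, $\mathrm{Bias}(h+b,\lambda,\pi)=\mathrm{Bias}(h,\lambda,\pi)$ and $\mathrm{Regret}(h+b,\lambda,\pi)=\mathrm{Regret}(h,\lambda,\pi)$, where the left-hand sides use the reshaped MDP built from the heuristic $h+b$.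
   Context: Let $\mathcal M=(\mathcal S,\mathcal A,P,r,\gamma)$ be a discounted MDP with transition kernel $P(\cdot|s,a)$, reward $r:\mathcal S\times\mathcal A\to[0,1]$ and discount $\gamma\in[0,1)$. A policy $\pi$ is a Markov kernel from $\mathcal S$ to distributions on $\mathcal A$. For a state $s$ (resp. a distribution $d_0$ on $\mathcal S$), $\rho^\pi(s)$ (resp. $\rho^\pi(d_0)$) denotes the law of the trajectory $s_0,a_0,s_1,a_1,\dots$ with $s_0=s$ (resp. $s_0\sim d_0$), $a_t\sim\pi(\cdot|s_t)$, $s_{t+1}\sim P(\cdot|s_t,a_t)$. $V^\pi(s)=\mathbb E_{\rho^\pi(s)}[\sum_{t\ge0}\gamma^t r(s_t,a_t)]$, and $V^*=V^{\pi^*}=\sup_\pi V^\pi$ for an optimal policy $\pi^*$ (assumed to exist). For $V:\mathcal S\to\mathbb R$ and a distribution $d$ on $\mathcal S$, $V(d)=\mathbb E_{s\sim d}[V(s)]$. A fixed initial distribution $d_0$ is given; $d_t^\pi$ is the law of $s_t$ under $\rho^\pi(d_0)$, $d^\pi=(1-\gamma)\sum_{t\ge0}\gamma^t d_t^\pi$, and $d^\pi(s,a)=d^\pi(s)\pi(a|s)$. Given a bounded heuristic $h:\mathcal S\to\mathbb R$ and $\lambda\in[0,1]$, the reshaped MDP is $\widetilde{\mathcal M}=(\mathcal S,\mathcal A,P,\widetilde r,\widetilde\gamma)$ with $\widetilde r(s,a)=r(s,a)+(1-\lambda)\gamma\,\mathbb E_{s'\sim P(\cdot|s,a)}[h(s')]$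 and $\widetilde\gamma=\lambda\gamma$. $\widetilde V^\pi(s)=\mathbb E_{\rho^\pi(s)}[\sum_{t\ge0}(\lambda\gamma)^t\widetilde r(s_t,a_t)]$ is the value of $\pi$ in $\widetilde{\mathcal M}$, and $\widetilde V^*=\sup_\pi\widetilde V^\pi$, attained by an optimal policy $\widetilde\pi^*$ of $\widetilde{\mathcal M}$ (assumed to exist). *)

From HB Require Import structures.
From mathcomp Require Import all_boot all_order all_algebra.
From mathcomp Require Import all_classical all_reals all_analysis.
Set Implicit Arguments. Unset Strict Implicit. Unset Printing Implicit Defensive.
Import Order.TTheory GRing.Theory Num.Theory.
Import numFieldNormedType.Exports.
Local Open Scope classical_set_scope.
Local Open Scope ring_scope.

Section MDP.
Context {d1 d2 : measure_display} {S : measurableType d1} {A : measurableType d2}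
  {R : realType}.

Definition expP (P : R.-pker (S * A)%type ~> S) (f : S -> R) (sa : S * A) : R :=
  \int[P sa]_(s' in setT) f s'.

Definition expPi (pi : R.-pker S ~> A) (g : S * A -> R) (s : S) : R :=
  \int[pi s]_(a in setT) g (s, a).

Definition stepOp (P : R.-pker (S * A)%type ~> S) (pi : R.-pker S ~> A)
  (f : S -> R) : S -> R := expPi pi (expP P f).

(* E_{rho^pi(s)} [g(s_t,a_t)] = (Ppi^t (E_{a~pi} g))(s) *)
Definition expStep (P : R.-pker (S * A)%type ~> S) (pi : R.-pker S ~> A)
  (t : nat) (g : S * A -> R) (s : S) : R :=
  iter t (stepOp P pi) (expPi pi g) s.

Definition value (P : R.-pker (S * A)%type ~> S) (pi : R.-pker S ~> A)
  (rr : S * A -> R) (disc : R) (s : S) : R :=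
  limn (fun n => \sum_(0 <= t < n) disc ^+ t * expStep P pi t rr s).

Definition atDist (d : probability S R) (V : S -> R) : R :=
  \int[d]_(s in setT) V s.

(* Expectation under the normalized discounted occupancy d^pi (state marginal):
   E_{s ~ d^pi}[f s] = (1-gamma) sum_t gamma^t E_{s ~ d_t^pi}[f s] *)
Definition occS (P : R.-pker (S * A)%type ~> S) (pi : R.-pker S ~> A)
  (gamma : R) (d0 : probability S R) (f : S -> R) : R :=
  (1 - gamma) * limn (fun n => \sum_(0 <= t < n)
      gamma ^+ t * atDist d0 (iter t (stepOp P pi) f)).

(* E_{(s,a) ~ d^pi}[g(s,a)], with d^pi(s,a) = d^pi(s) pi(a|s) *)
Definition occSA (P : R.-pker (S * A)%type ~> S) (pi : R.-pker S ~> A)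
  (gamma : R) (d0 : probability S R) (g : S * A -> R) : R :=
  occS P pi gamma d0 (expPi pi g).

Definition rtilde (P : R.-pker (S * A)%type ~> S) (r : S * A -> R)
  (gamma lambda : R) (h : S -> R) (sa : S * A) : R :=
  r sa + (1 - lambda) * gamma * expP P h sa.

Definition Vtilde (P : R.-pker (S * A)%type ~> S) (r : S * A -> R)
  (gamma lambda : R) (h : S -> R) (pi : R.-pker S ~> A) : S -> R :=
  value P pi (rtilde P r gamma lambda h) (lambda * gamma).

Definition optimal (P : R.-pker (S * A)%type ~> S) (r : S * A -> R) (gamma : R)
  (pistar : R.-pker S ~> A) : Prop :=
  forall (pi : R.-pker S ~> A) (s : S), value P pi r gamma s <= value P pistar r gamma s.

Definition optimal_tilde (P : R.-pker (S * A)%type ~> S) (r : S * A -> R)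
  (gamma lambda : R) (h : S -> R) (pit : R.-pker S ~> A) : Prop :=
  forall (pi : R.-pker S ~> A) (s : S),
    Vtilde P r gamma lambda h pi s <= Vtilde P r gamma lambda h pit s.

(* Regret(h,lambda,pi); pit is the optimal policy of the reshaped MDP,
   so V~* = Vtilde ... pit. *)
Definition Regret (P : R.-pker (S * A)%type ~> S) (r : S * A -> R)
  (gamma : R) (d0 : probability S R) (h : S -> R) (lambda : R)
  (pi pit : R.-pker S ~> A) : R :=
  lambda * (atDist d0 (Vtilde P r gamma lambda h pit)
            - atDist d0 (Vtilde P r gamma lambda h pi))
  + (1 - lambda) / (1 - gamma) *
      (occS P pi gamma d0 (Vtilde P r gamma lambda h pit)
       - occS P pi gamma d0 (Vtilde P r gamma lambda h pi)).

(* Bias(h,lambda,pi); pistar optimal for the original MDP (V* = value .. pistar),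
   pit optimal for the reshaped MDP. *)
Definition Bias (P : R.-pker (S * A)%type ~> S) (r : S * A -> R)
  (gamma : R) (d0 : probability S R) (h : S -> R) (lambda : R)
  (pi pistar pit : R.-pker S ~> A) : R :=
  (atDist d0 (value P pistar r gamma) - atDist d0 (Vtilde P r gamma lambda h pit))
  + gamma * (1 - lambda) / (1 - gamma) *
      occSA P pi gamma d0
        (expP P (fun s' => h s' - Vtilde P r gamma lambda h pit s')).

End MDP.

(* Everything reduces to three facts about bounded measurable functions:
   linearity of all the expectations involved, the Bellman equation
   V = E_pi r + gamma P_pi V of the values of pi (in the original and in the
   reshaped MDP), and the flow equation
   E_{d^pi} f - gamma E_{d^pi}[P_pi f] = (1 - gamma) f(d0) of the normalized
   occupancy.  The flow equation applied to V~* makes V~* cancel from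
   Regret + Bias; the Bellman equation of V~pi integrated against d^pi, with
   E_{d^pi} r = (1 - gamma) V^pi(d0), turns the rest into V*(d0) - V^pi(d0).
   Shifting h by b shifts the reshaped reward by (1 - lambda) gamma b, hence
   every reshaped value by c = (1 - lambda) gamma b / (1 - lambda gamma): the
   reshaped optimal policies are unchanged, c cancels in Regret, and it
   cancels in Bias because gamma (1 - lambda) (b - c) = (1 - gamma) c. *)
From HB Require Import structures.
From mathcomp Require Import all_boot all_order all_algebra.
From mathcomp Require Import all_classical all_reals all_analysis.
From mathcomp Require Import measurable_realfun ring.
Set Implicit Arguments. Unset Strict Implicit. Unset Printing Implicit Defensive.
Import Order.TTheory GRing.Theory Num.Theory.
Import numFieldNormedType.Exports.
Local Open Scope classical_set_scope.
Local Open Scope ring_scope.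

Definition bounded_measurable d (T : measurableType d) (R : realType) (f : T -> R) :=
  measurable_fun setT f /\ exists M : R, forall x, `|f x| <= M.

Section bounded_measurable.
Context d (T : measurableType d) (R : realType).
Implicit Types (f g : T -> R) (c : R).

Lemma bounded_measurable_cst c : bounded_measurable (fun _ : T => c).
Proof. by split => //; exists `|c|. Qed.

Lemma bounded_measurableD f g : bounded_measurable f -> bounded_measurable g ->
  bounded_measurable (fun x => f x + g x).
Proof.
case=> mf [M hM] [mg [N hN]]; split; first exact: measurable_funD.
by exists (M + N) => x; apply: le_trans (ler_normD _ _) _; rewrite lerD.
Qed.

Lemma bounded_measurableZ c f : bounded_measurable f ->
  bounded_measurable (fun x => c * f x).
Proof.
case=> mf [M hM]; split; first exact: measurable_funM.
by exists (`|c| * M) => x; rewrite normrM ler_wpM2l.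
Qed.

Lemma bounded_measurable_sum (F : nat -> T -> R) n :
  (forall t, bounded_measurable (F t)) ->
  bounded_measurable (fun x => \sum_(0 <= t < n) F t x).
Proof.
move=> bF; elim: n => [|n IH].
  by under eq_fun do rewrite big_geq //; exact: bounded_measurable_cst.
by under eq_fun do rewrite big_nat_recr //=; exact: bounded_measurableD.
Qed.

End bounded_measurable.

Section probability_integral.
Context d (T : measurableType d) (R : realType) (mu : {measure set T -> \bar R}).
Hypothesis mu1 : mu setT = 1%E.
Implicit Types (f g : T -> R) (c : R).

Lemma bounded_measurable_integrable f :
  bounded_measurable f -> mu.-integrable setT (EFin \o f).
Proof.
case=> mf [M hM]; apply: measurable_bounded_integrable => //.
  by rewrite mu1 ltry.
exists M; split; first exact: num_real.
by move=> M' /ltW MM' x _; exact: le_trans (hM x) MM'.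
Qed.

Lemma Rintegral_prob_cst c : \int[mu]_(x in setT) c = c.
Proof. by rewrite Rintegral_cst // mu1 /= mulr1. Qed.

Lemma Rintegral_prob_linear f g c :
  bounded_measurable f -> bounded_measurable g ->
  \int[mu]_(x in setT) (f x + c * g x)
    = \int[mu]_(x in setT) f x + c * \int[mu]_(x in setT) g x.
Proof.
move=> bf bg; have bcg := bounded_measurableZ c bg.
by rewrite RintegralD ?RintegralZl //; exact: bounded_measurable_integrable.
Qed.

Lemma Rintegral_prob_shift f c : bounded_measurable f ->
  \int[mu]_(x in setT) (f x + c) = \int[mu]_(x in setT) f x + c.
Proof.
move=> bf; have bc := bounded_measurable_cst T c.
by rewrite RintegralD ?Rintegral_prob_cst //; exact: bounded_measurable_integrable.
Qed.

Lemma Rintegral_prob_bound f M : bounded_measurable f ->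
  (forall x, `|f x| <= M) -> `|\int[mu]_(x in setT) f x| <= M.
Proof.
move=> bf hM.
apply: le_trans (le_normr_Rintegral measurableT (bounded_measurable_integrable bf)) _.
rewrite -[leRHS]Rintegral_prob_cst; apply: le_Rintegral => //.
  apply: bounded_measurable_integrable; split.
    by case: bf => mf _; exact: measurableT_comp.
  by exists M => x; rewrite normr_id.
exact/bounded_measurable_integrable/bounded_measurable_cst.
Qed.

Lemma Rintegral_bounded_cvg (f_ : nat -> T -> R) f M :
  (forall n, measurable_fun setT (f_ n)) -> (forall n x, `|f_ n x| <= M) ->
  (forall x, f_ ^~ x @ \oo --> f x) ->
  (fun n => \int[mu]_(x in setT) f_ n x) @ \oo --> \int[mu]_(x in setT) f x.
Proof.
move=> mf hM cf.
have bf : bounded_measurable f.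
  split; first exact: (measurable_fun_cvg mf (fun x _ => cf x)).
  exists M => x; apply: (cvgr_to_le (cvg_norm (cf x))).
  by apply: nearW => n; exact: hM.
have cf' x : setT x -> (fun n => (EFin \o f_ n) x) @ \oo --> (EFin \o f) x.
  by move=> _; apply: cvg_comp (cf x) _; exact: cvg_refl.
have := @dominated_cvg _ _ _ mu setT measurableT (fun n => EFin \o f_ n) (EFin \o f)
  (fun=> M%:E) (fun n => (measurable_EFinP _ _).2 (mf n)) cf' (fun _ _ => erefl)
  (bounded_measurable_integrable (bounded_measurable_cst T M))
  (fun n x _ => hM n x).
rewrite -(fineK (integrable_fin_num measurableT (bounded_measurable_integrable bf))).
exact: fine_cvg.
Qed.

End probability_integral.

Section kernel_integral.
Context d d' (X : measurableType d) (Y : measurableType d') (R : realType).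
Variable k : R.-pker X ~> Y.
Implicit Types (f g : X * Y -> R) (c : R).

Definition kintegral g (x : X) : R := \int[k x]_(y in setT) g (x, y).

Lemma bounded_measurable_section g x : bounded_measurable g ->
  bounded_measurable (fun y => g (x, y)).
Proof.
by case=> mg [M hM]; split; [exact: measurableT_comp mg (pair1_measurable x)|exists M].
Qed.

Lemma kintegral_linear f g c x : bounded_measurable f -> bounded_measurable g ->
  kintegral (fun z => f z + c * g z) x = kintegral f x + c * kintegral g x.
Proof.
by move=> bf bg; apply: Rintegral_prob_linear; rewrite ?prob_kernel //;
  exact: bounded_measurable_section.
Qed.

Lemma kintegral_shift g c x : bounded_measurable g ->
  kintegral (fun z => g z + c) x = kintegral g x + c.
Proof.
by move=> bg; apply: Rintegral_prob_shift; rewrite ?prob_kernel //;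
  exact: bounded_measurable_section.
Qed.

Lemma kintegral_cst c x : kintegral (fun=> c) x = c.
Proof. by apply: Rintegral_prob_cst; exact: prob_kernel. Qed.

Lemma kintegral_bound g M x : bounded_measurable g -> (forall z, `|g z| <= M) ->
  `|kintegral g x| <= M.
Proof.
by move=> bg hM; apply: Rintegral_prob_bound => //;
  [exact: prob_kernel|exact: bounded_measurable_section].
Qed.

(* The library provides measurability of kernel integrals of nonnegative
   functions only, hence the shift by M. *)
Lemma bounded_measurable_kintegral g : bounded_measurable g ->
  bounded_measurable (kintegral g).
Proof.
move=> bg; have [mg [M hM]] := bg.
split; last by exists M => x; exact: kintegral_bound.
have bgM : bounded_measurable (fun z => g z + M).
  exact/bounded_measurableD/bounded_measurable_cst.
have -> : kintegral g
    = fun x => fine (\int[k x]_y (EFin \o (fun z => (g z + M)%R)) (x, y))%E - M.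
  apply/funext => x; rewrite -[fine _]/(kintegral (fun z => g z + M) x).
  by rewrite kintegral_shift ?addrK.
apply: measurable_funB => //; apply: measurableT_comp; first exact: fine_measurable.
apply: (measurable_fun_integral_sfinite_kernel _ k).
  move=> z /=; rewrite lee_fin -lerBlDr sub0r.
  by move: (hM z); rewrite ler_norml => /andP[].
by apply/measurable_EFinP; case: bgM.
Qed.

Lemma kintegral_cvg (g_ : nat -> X * Y -> R) g M x :
  (forall n, measurable_fun setT (g_ n)) -> (forall n z, `|g_ n z| <= M) ->
  (forall z, g_ ^~ z @ \oo --> g z) ->
  (fun n => kintegral (g_ n) x) @ \oo --> kintegral g x.
Proof.
move=> mg hM cg; rewrite /kintegral.
apply: (@Rintegral_bounded_cvg _ _ _ _ (@prob_kernel _ _ _ _ _ k x)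
  (fun n y => g_ n (x, y)) _ M).
- by move=> n; exact: measurableT_comp (mg n) (pair1_measurable x).
- by move=> n y; exact: hM.
- by move=> y; exact: cg.
Qed.

End kernel_integral.

Section transition_operator.
Context d1 d2 (S : measurableType d1) (A : measurableType d2) (R : realType).
Variables (P : R.-pker (S * A)%type ~> S) (pi : R.-pker S ~> A).
Implicit Types (f g : S -> R) (c : R).

Lemma bounded_measurable_snd f : bounded_measurable f ->
  bounded_measurable (fun z : (S * A) * S => f z.2).
Proof.
by case=> mf [M hM]; split; [exact: measurableT_comp mf measurable_snd|exists M].
Qed.

Lemma bounded_measurable_expP f : bounded_measurable f ->
  bounded_measurable (expP P f).
Proof. by move=> /bounded_measurable_snd; exact: bounded_measurable_kintegral. Qed.

Lemma bounded_measurable_expPi (g : S * A -> R) : bounded_measurable g ->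
  bounded_measurable (expPi pi g).
Proof. exact: bounded_measurable_kintegral. Qed.

Lemma bounded_measurable_stepOp f : bounded_measurable f ->
  bounded_measurable (stepOp P pi f).
Proof. by move=> bf; exact/bounded_measurable_expPi/bounded_measurable_expP. Qed.

Lemma bounded_measurable_iter_stepOp f t : bounded_measurable f ->
  bounded_measurable (iter t (stepOp P pi) f).
Proof. by move=> bf; elim: t => [|t IH] //=; exact: bounded_measurable_stepOp. Qed.

Lemma expP_linear f g c sa : bounded_measurable f -> bounded_measurable g ->
  expP P (fun s => f s + c * g s) sa = expP P f sa + c * expP P g sa.
Proof.
move=> /bounded_measurable_snd bf /bounded_measurable_snd bg.
exact: (kintegral_linear P c sa bf bg).
Qed.

Lemma expP_shift f c sa : bounded_measurable f ->
  expP P (fun s => f s + c) sa = expP P f sa + c.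
Proof. by move=> /bounded_measurable_snd bf; exact: (kintegral_shift P c sa bf). Qed.

Lemma expP_bound f M sa : bounded_measurable f -> (forall s, `|f s| <= M) ->
  `|expP P f sa| <= M.
Proof.
by move=> /bounded_measurable_snd bf hM; apply: (kintegral_bound _ _ bf) => -[].
Qed.

Lemma expPi_linear (f g : S * A -> R) c s :
  bounded_measurable f -> bounded_measurable g ->
  expPi pi (fun z => f z + c * g z) s = expPi pi f s + c * expPi pi g s.
Proof. exact: kintegral_linear. Qed.

Lemma expPi_shift (g : S * A -> R) c s : bounded_measurable g ->
  expPi pi (fun z => g z + c) s = expPi pi g s + c.
Proof. exact: kintegral_shift. Qed.

Lemma stepOp_linear f g c : bounded_measurable f -> bounded_measurable g ->
  stepOp P pi (fun s => f s + c * g s) = fun s => stepOp P pi f s + c * stepOp P pi g s.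
Proof.
move=> bf bg; apply/funext => s; rewrite /stepOp -expPi_linear;
  try exact: bounded_measurable_expP.
by congr expPi; apply/funext => sa; rewrite expP_linear.
Qed.

Lemma stepOp_shift f c : bounded_measurable f ->
  stepOp P pi (fun s => f s + c) = fun s => stepOp P pi f s + c.
Proof.
move=> bf; apply/funext => s.
rewrite /stepOp -expPi_shift; last exact: bounded_measurable_expP.
by congr expPi; apply/funext => sa; rewrite expP_shift.
Qed.

Lemma stepOp_cst c : stepOp P pi (fun=> c) = fun=> c.
Proof.
apply/funext => s; rewrite /stepOp /expPi.
under eq_fun do rewrite [expP _ _ _]kintegral_cst.
exact: kintegral_cst.
Qed.

Lemma stepOp_bound f M s : bounded_measurable f -> (forall s, `|f s| <= M) ->
  `|stepOp P pi f s| <= M.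
Proof.
move=> bf hM; apply: kintegral_bound => [|sa]; first exact: bounded_measurable_expP.
exact: expP_bound.
Qed.

Lemma stepOp_cvg (f_ : nat -> S -> R) f M s :
  (forall n, measurable_fun setT (f_ n)) -> (forall n s, `|f_ n s| <= M) ->
  (forall s, f_ ^~ s @ \oo --> f s) ->
  (fun n => stepOp P pi (f_ n) s) @ \oo --> stepOp P pi f s.
Proof.
move=> mf hM cf; have bf n : bounded_measurable (f_ n) by split; [|exists M].
rewrite /stepOp /expPi.
apply: (@kintegral_cvg _ _ _ _ _ pi (fun n => expP P (f_ n)) (expP P f) M s).
- by move=> n; case: (bounded_measurable_expP (bf n)).
- by move=> n sa; exact: expP_bound.
- move=> sa.
  apply: (@kintegral_cvg _ _ _ _ _ P (fun n z => f_ n z.2) (fun z => f z.2) M sa).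
  + by move=> n; exact: measurableT_comp (mf n) measurable_snd.
  + by move=> n z; exact: hM.
  + by move=> z; exact: cf.
Qed.

Lemma stepOp_sum (w : nat -> R) (F : nat -> S -> R) n :
  (forall t, bounded_measurable (F t)) ->
  stepOp P pi (fun s => \sum_(0 <= t < n) w t * F t s)
    = fun s => \sum_(0 <= t < n) w t * stepOp P pi (F t) s.
Proof.
move=> bF; elim: n => [|n IH].
  under eq_fun do rewrite big_geq //.
  by rewrite stepOp_cst; apply/funext => s; rewrite big_geq.
under eq_fun do rewrite big_nat_recr //=.
rewrite stepOp_linear ?IH //; first by apply/funext => s; rewrite big_nat_recr.
by apply: bounded_measurable_sum => t; exact: bounded_measurableZ.
Qed.

Lemma iter_stepOp_linear f g c t : bounded_measurable f -> bounded_measurable g ->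
  iter t (stepOp P pi) (fun s => f s + c * g s)
    = fun s => iter t (stepOp P pi) f s + c * iter t (stepOp P pi) g s.
Proof.
move=> bf bg; elim: t => [|t IH] //=.
by rewrite IH stepOp_linear //; exact: bounded_measurable_iter_stepOp.
Qed.

Lemma iter_stepOp_shift f c t : bounded_measurable f ->
  iter t (stepOp P pi) (fun s => f s + c) = fun s => iter t (stepOp P pi) f s + c.
Proof.
move=> bf; elim: t => [|t IH] //=.
by rewrite IH stepOp_shift //; exact: bounded_measurable_iter_stepOp.
Qed.

Lemma iter_stepOp_cst c t : iter t (stepOp P pi) (fun=> c) = fun=> c.
Proof. by elim: t => [|t IH] //=; rewrite IH stepOp_cst. Qed.

Lemma iter_stepOp_bound f M t s : bounded_measurable f -> (forall s, `|f s| <= M) ->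
  `|iter t (stepOp P pi) f s| <= M.
Proof.
move=> bf hM; elim: t s => [|t IH] s //=.
by apply: stepOp_bound => //; exact: bounded_measurable_iter_stepOp.
Qed.

End transition_operator.

Section weighted_geometric_series.
Context (R : realType) (q M : R) (a : nat -> R).
Hypotheses (hq : 0 <= q < 1) (haM : forall t, `|a t| <= M).

Lemma weighted_geometric_sum_bound n :
  `|\sum_(0 <= t < n) q ^+ t * a t| <= M / (1 - q).
Proof.
case/andP: hq => q0 q1; have M0 : 0 <= M by apply: le_trans (haM 0%N).
apply: le_trans (ler_norm_sum _ _ _) _.
apply: le_trans (_ : \sum_(0 <= t < n) M * q ^+ t <= _).
  apply: ler_sum => t _; rewrite normrM (ger0_norm (exprn_ge0 t q0)) mulrC.
  by apply: ler_wpM2r; rewrite ?exprn_ge0.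
have /(congr1 (fun u => u n)) := geometric_seriesE M (negbT (lt_eqF q1)).
rewrite seriesEnat /= => ->.
by rewrite ler_pM2r ?invr_gt0 ?subr_gt0 // ler_piMr // lerBlDr lerDl exprn_ge0.
Qed.

Lemma is_cvg_weighted_geometric_series :
  cvgn (fun n => \sum_(0 <= t < n) q ^+ t * a t).
Proof.
case/andP: hq => q0 q1; have M0 : 0 <= M by apply: le_trans (haM 0%N).
apply: (@normed_cvg _ R^o (fun t => q ^+ t * a t)).
apply: (@series_le_cvg _ _ (geometric M q)).
- by move=> t; rewrite normr_ge0.
- by move=> t; rewrite /geometric /= mulr_ge0 ?exprn_ge0.
- move=> t; rewrite /geometric /= normrM (ger0_norm (exprn_ge0 t q0)) mulrC.
  by apply: ler_wpM2r; rewrite ?exprn_ge0.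
- by apply: is_cvg_geometric_series; rewrite ger0_norm.
Qed.

End weighted_geometric_series.

Section value.
Context d1 d2 (S : measurableType d1) (A : measurableType d2) (R : realType).
Variables (P : R.-pker (S * A)%type ~> S) (pi : R.-pker S ~> A) (disc : R).
Hypothesis hdisc : 0 <= disc < 1.
Implicit Types (g : S * A -> R) (c : R).

Definition value_partial g n s := \sum_(0 <= t < n) disc ^+ t * expStep P pi t g s.

Lemma bounded_measurable_expStep g t : bounded_measurable g ->
  bounded_measurable (expStep P pi t g).
Proof. by move=> bg; exact/bounded_measurable_iter_stepOp/bounded_measurable_expPi. Qed.

Lemma expStep_bound g M t s : bounded_measurable g -> (forall z, `|g z| <= M) ->
  `|expStep P pi t g s| <= M.
Proof.
move=> bg hM; apply: iter_stepOp_bound => [|s']; first exact: bounded_measurable_expPi.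
exact: kintegral_bound.
Qed.

Lemma bounded_measurable_value_partial g n : bounded_measurable g ->
  bounded_measurable (value_partial g n).
Proof.
move=> bg; apply: bounded_measurable_sum => t.
exact/bounded_measurableZ/bounded_measurable_expStep.
Qed.

Lemma value_partial_bound g M n s : bounded_measurable g -> (forall z, `|g z| <= M) ->
  `|value_partial g n s| <= M / (1 - disc).
Proof.
by move=> bg hM; apply: weighted_geometric_sum_bound => // t; exact: expStep_bound.
Qed.

Lemma value_partial_cvg g s : bounded_measurable g ->
  value_partial g ^~ s @ \oo --> value P pi g disc s.
Proof.
move=> bg; have [_ [M hM]] := bg.
exact: (is_cvg_weighted_geometric_series hdisc (fun t => expStep_bound t s bg hM)).
Qed.

Lemma bounded_measurable_value g : bounded_measurable g ->
  bounded_measurable (value P pi g disc).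
Proof.
move=> bg; have [_ [M hM]] := bg; split.
  apply: (measurable_fun_cvg (h := value_partial g)) => [n|s _].
    by case: (bounded_measurable_value_partial n bg).
  exact: value_partial_cvg.
exists (M / (1 - disc)) => s.
apply: (cvgr_to_le (cvg_norm (value_partial_cvg (s := s) bg))).
by apply: nearW => n; exact: value_partial_bound.
Qed.

Lemma value_partialS g n : bounded_measurable g ->
  value_partial g n.+1 = fun s => expPi pi g s + disc * stepOp P pi (value_partial g n) s.
Proof.
move=> bg; rewrite /value_partial stepOp_sum => [|t];
  last exact: bounded_measurable_expStep.
apply/funext => s; rewrite big_nat_recl //= expr0 mul1r big_distrr /=.
by congr (_ + _); apply: eq_bigr => t _; rewrite exprS mulrA.
Qed.

Lemma value_bellman g : bounded_measurable g ->
  value P pi g disc = fun s => expPi pi g s + disc * stepOp P pi (value P pi g disc) s.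
Proof.
move=> bg; have [_ [M hM]] := bg; apply/funext => s.
apply: cvg_lim => //.
suff : value_partial g ^~ s @ \oo
    --> expPi pi g s + disc * stepOp P pi (value P pi g disc) s by [].
rewrite -cvg_shiftS /=; under eq_fun do rewrite value_partialS //=.
apply: cvgD; first exact: cvg_cst.
apply: cvgM; first exact: cvg_cst.
apply: (stepOp_cvg (M := M / (1 - disc))) => [n|n s'|s'].
- by case: (bounded_measurable_value_partial n bg).
- exact: value_partial_bound.
- exact: value_partial_cvg.
Qed.

Lemma value_shift g c : bounded_measurable g ->
  value P pi (fun z => g z + c) disc = fun s => value P pi g disc s + c / (1 - disc).
Proof.
move=> bg; apply/funext => s; apply: cvg_lim => //.
have -> : (fun n => \sum_(0 <= t < n) disc ^+ t * expStep P pi t (fun z => g z + c) s)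
    = fun n => value_partial g n s + series (geometric c disc) n.
  apply/funext => n; rewrite /value_partial seriesEnat /= -big_split /=.
  apply: eq_bigr => t _; rewrite /expStep.
  have -> : expPi pi (fun z => g z + c) = fun s => expPi pi g s + c.
    by apply/funext => s'; exact: expPi_shift.
  by rewrite iter_stepOp_shift ?mulrDr ?[c * _]mulrC //; exact: bounded_measurable_expPi.
apply: cvgD; first exact: value_partial_cvg.
by apply: cvg_geometric_series; case/andP: hdisc => h0 h1; rewrite ger0_norm.
Qed.

End value.

Section occupancy.
Context d1 d2 (S : measurableType d1) (A : measurableType d2) (R : realType).
Variables (P : R.-pker (S * A)%type ~> S) (pi : R.-pker S ~> A) (gamma : R).
Variable d0 : probability S R.
Hypothesis hgamma : 0 <= gamma < 1.
Implicit Types (f g : S -> R) (c : R).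

Lemma atDist_linear f g c : bounded_measurable f -> bounded_measurable g ->
  atDist d0 (fun s => f s + c * g s) = atDist d0 f + c * atDist d0 g.
Proof. exact/Rintegral_prob_linear/probability_setT. Qed.

Lemma atDist_shift f c : bounded_measurable f ->
  atDist d0 (fun s => f s + c) = atDist d0 f + c.
Proof. exact/Rintegral_prob_shift/probability_setT. Qed.

Definition occupancy_partial f n :=
  \sum_(0 <= t < n) gamma ^+ t * atDist d0 (iter t (stepOp P pi) f).

Lemma occSE f : occS P pi gamma d0 f = (1 - gamma) * limn (occupancy_partial f).
Proof. by []. Qed.

Lemma is_cvg_occupancy_partial f : bounded_measurable f -> cvgn (occupancy_partial f).
Proof.
move=> bf; have [_ [M hM]] := bf; apply: (is_cvg_weighted_geometric_series hgamma) => t.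
apply: Rintegral_prob_bound => [||s]; first exact: probability_setT.
  exact: bounded_measurable_iter_stepOp.
exact: iter_stepOp_bound.
Qed.

Lemma occS_linear f g c : bounded_measurable f -> bounded_measurable g ->
  occS P pi gamma d0 (fun s => f s + c * g s)
    = occS P pi gamma d0 f + c * occS P pi gamma d0 g.
Proof.
move=> bf bg; rewrite !occSE.
have -> : occupancy_partial (fun s => f s + c * g s)
    = fun n => occupancy_partial f n + c * occupancy_partial g n.
  apply/funext => n; rewrite /occupancy_partial big_distrr -big_split /=.
  apply: eq_bigr => t _; rewrite iter_stepOp_linear // atDist_linear;
    try exact: bounded_measurable_iter_stepOp.
  by rewrite mulrDr mulrCA.
rewrite (cvg_lim _ (cvgD (is_cvg_occupancy_partial bf)
  (cvgM (cvg_cst c) (is_cvg_occupancy_partial bg)))) //.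
by rewrite mulrDr mulrCA.
Qed.

Lemma occS_cst c : occS P pi gamma d0 (fun=> c) = c.
Proof.
case/andP: hgamma => g0 g1; rewrite occSE.
have -> : occupancy_partial (fun=> c) = series (geometric c gamma).
  apply/funext => n; rewrite /occupancy_partial seriesEnat /=; apply: eq_bigr => t _.
  by rewrite iter_stepOp_cst /atDist (Rintegral_prob_cst (probability_setT d0)) mulrC.
have gamma_lt1 : `|gamma| < 1 by rewrite ger0_norm.
rewrite (cvg_lim _ (cvg_geometric_series (a := c) gamma_lt1)) //.
by rewrite mulrCA mulfV ?mulr1 // subr_eq0 eq_sym lt_eqF.
Qed.

Lemma occS_shift f c : bounded_measurable f ->
  occS P pi gamma d0 (fun s => f s + c) = occS P pi gamma d0 f + c.
Proof.
move=> bf; rewrite -[in RHS](occS_cst c) -[X in _ + X]mul1r.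
rewrite -(occS_linear 1 bf (bounded_measurable_cst S c)).
by under [in RHS]eq_fun do rewrite mul1r.
Qed.

Lemma occS_flow f : bounded_measurable f ->
  occS P pi gamma d0 f - gamma * occS P pi gamma d0 (stepOp P pi f)
    = (1 - gamma) * atDist d0 f.
Proof.
move=> bf; have bPf := bounded_measurable_stepOp P pi bf.
have partialS n : occupancy_partial f n.+1
    = atDist d0 f + gamma * occupancy_partial (stepOp P pi f) n.
  rewrite /occupancy_partial big_nat_recl //= expr0 mul1r big_distrr /=.
  by congr (_ + _); apply: eq_bigr => t _; rewrite -iterSr exprS mulrA.
have : occupancy_partial f @ \oo
    --> atDist d0 f + gamma * limn (occupancy_partial (stepOp P pi f)).
  rewrite -cvg_shiftS /=; under eq_fun do rewrite partialS.
  exact: cvgD (cvg_cst _) (cvgM (cvg_cst _) (is_cvg_occupancy_partial bPf)).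
by move=> lim_f; rewrite !occSE (cvg_lim _ lim_f) //; ring.
Qed.

Lemma occSA_expP f :
  occSA P pi gamma d0 (expP P f) = occS P pi gamma d0 (stepOp P pi f).
Proof. by []. Qed.

Lemma occS_reward (g : S * A -> R) : bounded_measurable g ->
  occS P pi gamma d0 (expPi pi g) = (1 - gamma) * atDist d0 (value P pi g gamma).
Proof.
move=> bg; have bV := bounded_measurable_value P pi hgamma bg.
rewrite -occS_flow // {1}(value_bellman P pi hgamma bg) occS_linear ?addrK //.
  exact: bounded_measurable_expPi.
exact: bounded_measurable_stepOp.
Qed.

End occupancy.

Section reshaping.
Context d1 d2 (S : measurableType d1) (A : measurableType d2) (R : realType).
Variables (P : R.-pker (S * A)%type ~> S) (r : S * A -> R) (gamma : R).
Variables (d0 : probability S R) (lambda : R).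
Hypotheses (br : bounded_measurable r) (hgamma : 0 <= gamma < 1).
Hypothesis hlambda : 0 <= lambda <= 1.

Lemma reshaped_discount : 0 <= lambda * gamma < 1.
Proof.
case/andP: hgamma => g0 g1; case/andP: hlambda => l0 l1.
by rewrite mulr_ge0 //= (le_lt_trans _ g1) // ler_piMl.
Qed.

Lemma bounded_measurable_rtilde h : bounded_measurable h ->
  bounded_measurable (rtilde P r gamma lambda h).
Proof.
by move=> bh; exact/bounded_measurableD/bounded_measurableZ/bounded_measurable_expP.
Qed.

Lemma bounded_measurable_Vtilde h q : bounded_measurable h ->
  bounded_measurable (Vtilde P r gamma lambda h q).
Proof.
move=> bh.
exact/(bounded_measurable_value _ _ reshaped_discount)/bounded_measurable_rtilde.
Qed.

Lemma occS_Vtilde h (pi : R.-pker S ~> A) : bounded_measurable h ->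
  occS P pi gamma d0 (Vtilde P r gamma lambda h pi)
    = (1 - gamma) * atDist d0 (value P pi r gamma)
      + (1 - lambda) * gamma * occS P pi gamma d0 (stepOp P pi h)
      + lambda * gamma * occS P pi gamma d0 (stepOp P pi (Vtilde P r gamma lambda h pi)).
Proof.
move=> bh; set Vp := Vtilde P r gamma lambda h pi.
have bEr := bounded_measurable_expPi pi br.
have bPh := bounded_measurable_stepOp P pi bh.
have bPVp := bounded_measurable_stepOp P pi (bounded_measurable_Vtilde pi bh).
have := value_bellman P pi reshaped_discount (bounded_measurable_rtilde bh).
rewrite -/(Vtilde P r gamma lambda h pi) -/Vp => bellman.
rewrite -(occS_reward P pi d0 hgamma br) -(occS_linear P pi d0 hgamma _ bEr bPh).
have bErPh := bounded_measurableD bEr (bounded_measurableZ ((1 - lambda) * gamma) bPh).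
rewrite -(occS_linear P pi d0 hgamma _ bErPh bPVp).
rewrite {1}bellman; congr occS; apply/funext => s.
by rewrite /rtilde (expPi_linear pi _ s br (bounded_measurable_expP P bh)).
Qed.

Lemma performance_decomposition h (pi pistar pit : R.-pker S ~> A) :
  bounded_measurable h ->
  atDist d0 (value P pistar r gamma) - atDist d0 (value P pi r gamma)
    = Regret P r gamma d0 h lambda pi pit + Bias P r gamma d0 h lambda pi pistar pit.
Proof.
move=> bh; have g1 : 1 - gamma != 0.
  by case/andP: hgamma => _ ?; rewrite subr_eq0 eq_sym lt_eqF.
set Vs := Vtilde P r gamma lambda h pit; set Vp := Vtilde P r gamma lambda h pi.
have bVs : bounded_measurable Vs by exact: bounded_measurable_Vtilde.
have bVp : bounded_measurable Vp by exact: bounded_measurable_Vtilde.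
have bias_term : occSA P pi gamma d0 (expP P (fun s => h s - Vs s))
    = occS P pi gamma d0 (stepOp P pi h) - occS P pi gamma d0 (stepOp P pi Vs).
  have -> : (fun s => h s - Vs s) = fun s => h s + -1 * Vs s.
    by apply/funext => s; rewrite mulN1r.
  rewrite occSA_expP stepOp_linear // occS_linear ?mulN1r //;
    exact: bounded_measurable_stepOp.
have occS_Vs : occS P pi gamma d0 Vs
    = (1 - gamma) * atDist d0 Vs + gamma * occS P pi gamma d0 (stepOp P pi Vs).
  by rewrite -(occS_flow P pi d0 hgamma bVs); ring.
have atDist_Vp : atDist d0 Vp
    = (occS P pi gamma d0 Vp - gamma * occS P pi gamma d0 (stepOp P pi Vp)) / (1 - gamma).
  by rewrite (occS_flow P pi d0 hgamma bVp); field.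
rewrite /Regret /Bias -/Vs -/Vp bias_term occS_Vs atDist_Vp (occS_Vtilde pi bh) -/Vp.
(* [field] compares atoms up to conversion, which would unfold these
   expectations; they are abstracted first. *)
generalize (atDist d0 (value P pistar r gamma)) (atDist d0 (value P pi r gamma))
  (atDist d0 Vs)
  (occS P pi gamma d0 (stepOp P pi h)) (occS P pi gamma d0 (stepOp P pi Vs))
  (occS P pi gamma d0 (stepOp P pi Vp)) => ? ? ? ? ? ?.
by field.
Qed.

Lemma Vtilde_shift h b q : bounded_measurable h ->
  Vtilde P r gamma lambda (fun s => h s + b) q
    = fun s => Vtilde P r gamma lambda h q s
                 + (1 - lambda) * gamma * b / (1 - lambda * gamma).
Proof.
move=> bh; rewrite /Vtilde; have -> : rtilde P r gamma lambda (fun s => h s + b)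
    = fun sa => rtilde P r gamma lambda h sa + (1 - lambda) * gamma * b.
  by apply/funext => sa; rewrite /rtilde expP_shift // mulrDr addrA.
exact/(value_shift _ _ reshaped_discount)/bounded_measurable_rtilde.
Qed.

Lemma optimal_tilde_shift h b q : bounded_measurable h ->
  optimal_tilde P r gamma lambda (fun s => h s + b) q ->
  optimal_tilde P r gamma lambda h q.
Proof. by move=> bh opt p s; have := opt p s; rewrite !Vtilde_shift // lerD2r. Qed.

Lemma optimal_tilde_Vtilde_eq h p q :
  optimal_tilde P r gamma lambda h p -> optimal_tilde P r gamma lambda h q ->
  Vtilde P r gamma lambda h p = Vtilde P r gamma lambda h q.
Proof.
by move=> hp hq; apply/funext => s; apply/le_anti/andP; split; [exact: hq|exact: hp].
Qed.

Lemma Regret_shift h b (pi pit pitb : R.-pker S ~> A) : bounded_measurable h ->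
  optimal_tilde P r gamma lambda h pit ->
  optimal_tilde P r gamma lambda (fun s => h s + b) pitb ->
  Regret P r gamma d0 (fun s => h s + b) lambda pi pitb
    = Regret P r gamma d0 h lambda pi pit.
Proof.
move=> bh hpit hpitb; have bV q := bounded_measurable_Vtilde q bh.
rewrite /Regret !(Vtilde_shift b _ bh).
rewrite (optimal_tilde_Vtilde_eq (optimal_tilde_shift bh hpitb) hpit).
rewrite !(atDist_shift d0 _ (bV _)) !(occS_shift P pi d0 hgamma _ (bV _)).
generalize (atDist d0 (Vtilde P r gamma lambda h pit))
  (atDist d0 (Vtilde P r gamma lambda h pi))
  (occS P pi gamma d0 (Vtilde P r gamma lambda h pit))
  (occS P pi gamma d0 (Vtilde P r gamma lambda h pi)) => ? ? ? ?.
by ring.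
Qed.

Lemma Bias_shift h b (pi pistar pit pitb : R.-pker S ~> A) : bounded_measurable h ->
  optimal_tilde P r gamma lambda h pit ->
  optimal_tilde P r gamma lambda (fun s => h s + b) pitb ->
  Bias P r gamma d0 (fun s => h s + b) lambda pi pistar pitb
    = Bias P r gamma d0 h lambda pi pistar pit.
Proof.
move=> bh hpit hpitb.
have g1 : 1 - gamma != 0 by case/andP: hgamma => _ ?; rewrite subr_eq0 eq_sym lt_eqF.
have lg1 : 1 - lambda * gamma != 0.
  by case/andP: reshaped_discount => _ ?; rewrite subr_eq0 eq_sym lt_eqF.
rewrite /Bias [in LHS]occSA_expP [in RHS]occSA_expP [in LHS](Vtilde_shift b pitb bh).
rewrite (optimal_tilde_Vtilde_eq (optimal_tilde_shift bh hpitb) hpit).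
set c := (1 - lambda) * gamma * b / (1 - lambda * gamma).
set Vs := Vtilde P r gamma lambda h pit.
have bVs : bounded_measurable Vs := bounded_measurable_Vtilde pit bh.
have bhVs : bounded_measurable (fun s => h s - Vs s).
  have := bounded_measurableD bh (bounded_measurableZ (-1) bVs).
  by under eq_fun do rewrite mulN1r.
have -> : (fun s => h s + b - (Vs s + c)) = fun s => (h s - Vs s) + (b - c).
  by apply/funext => s; rewrite opprD addrACA.
rewrite (atDist_shift d0 c bVs) (stepOp_shift P pi (b - c) bhVs).
rewrite (occS_shift P pi d0 hgamma _ (bounded_measurable_stepOp P pi bhVs)) /c.
generalize (atDist d0 (value P pistar r gamma)) (atDist d0 Vs)
  (occS P pi gamma d0 (stepOp P pi (fun s => h s - Vs s))) => ? ? ?.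
by field; apply/andP.
Qed.

End reshaping.

Theorem theorem1
  (d1 d2 : measure_display) (S : measurableType d1) (A : measurableType d2)
  (R : realType)
  (P : R.-pker (S * A)%type ~> S) (r : S * A -> R) (gamma : R)
  (d0 : probability S R)
  (hr_meas : measurable_fun setT r)
  (hr01 : forall sa, 0 <= r sa <= 1)
  (hgamma : 0 <= gamma < 1)
  (pistar : R.-pker S ~> A) (hpistar : optimal P r gamma pistar)
  (pi : R.-pker S ~> A) (h : S -> R)
  (hh_meas : measurable_fun setT h) (hh_bdd : exists M : R, forall s, `|h s| <= M)
  (lambda : R) (hlambda : 0 <= lambda <= 1)
  (pit : R.-pker S ~> A) (hpit : optimal_tilde P r gamma lambda h pit) :
  atDist d0 (value P pistar r gamma) - atDist d0 (value P pi r gamma)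
    = Regret P r gamma d0 h lambda pi pit + Bias P r gamma d0 h lambda pi pistar pit
  /\
  (forall (b : R) (pitb : R.-pker S ~> A),
     optimal_tilde P r gamma lambda (fun s => h s + b) pitb ->
     Bias P r gamma d0 (fun s => h s + b) lambda pi pistar pitb
       = Bias P r gamma d0 h lambda pi pistar pit
     /\ Regret P r gamma d0 (fun s => h s + b) lambda pi pitb
       = Regret P r gamma d0 h lambda pi pit).
Proof.
have br : bounded_measurable r.
  by split => //; exists 1 => sa; have /andP[r0 r1] := hr01 sa; rewrite ger0_norm.
have bh : bounded_measurable h by split.
split; first exact: performance_decomposition.
move=> b pitb hpitb; split.
  exact: Bias_shift.
exact: Regret_shift.
Qed.
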